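(* Let $G$ be a group with identity $e$, $A$ a finite set, $S\subseteq G$ finite with $e\in S$. Suppose $(\mathcal P,f)$ generates a local map $\mu:A^S\to A$, with $f$ well-behaved, $|S|\ge2$ and $|A|\ge3$. Then $e$ is essential for $\mu$.
   Context: $A^S$ is the set of functions $S\to A$. For $s\in S$, $\mathrm{Res}_s(z)=z|_{S\setminus\{s\}}$. An element $s\in S$ is essential for $\mu$ if there exist $z,w\in A^S$ with $\mathrm{Res}_s(z)=\mathrm{Res}_s(w)$ but $\mu(z)\neq\mu(w)$. The pair $(\mathcal P,f)$ generates $\mu$ if $\mathcal P=\{z\in A^S:\mu(z)\neq z(e)\}$ and $f:\mathcal P\to A$ is the restriction of $\mu$ to $\mathcal P$. The function $f$ is well-behaved if for all $p,q\in\mathcal P$: $p(e)=q(e)$ if and only if $f(p)=f(q)$. *)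

From Stdlib Require List.
From mathcomp Require Import all_boot.
Set Implicit Arguments. Unset Strict Implicit. Unset Printing Implicit Defensive.

Definition is_group (G : Type) (mul : G -> G -> G) (inv : G -> G) (e : G) : Prop :=
  (forall x y z, mul x (mul y z) = mul (mul x y) z) /\
  (forall x, mul e x = x /\ mul x e = x) /\
  (forall x, mul (inv x) x = e /\ mul x (inv x) = e).

Definition finite_subset (G : Type) (S : G -> Prop) : Prop :=
  exists l : list G, forall g, S g <-> List.In g l.

Definition elts (G : Type) (S : G -> Prop) := {g : G | S g}.
Definition config (G : Type) (S : G -> Prop) (A : Type) := elts S -> A.

Definition res_eq (G A : Type) (S : G -> Prop) (s : G) (z w : config S A) : Prop :=
  forall t : elts S, proj1_sig t <> s -> z t = w t.

Definition essential (G A : Type) (S : G -> Prop) (mu : config S A -> A) (s : G) : Prop :=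
  exists z w : config S A, res_eq s z w /\ mu z <> mu w.

(* (P, f) generates mu: P = {z | mu z <> z(e)} and f is mu restricted to P
   (f is given as a total function, only its values on P matter). *)
Definition generates (G A : Type) (S : G -> Prop) (e : G) (he : S e)
  (P : config S A -> Prop) (f : config S A -> A) (mu : config S A -> A) : Prop :=
  (forall z, P z <-> mu z <> z (exist _ e he)) /\
  (forall p, P p -> f p = mu p).

Definition well_behaved (G A : Type) (S : G -> Prop) (e : G) (he : S e)
  (P : config S A -> Prop) (f : config S A -> A) : Prop :=
  forall p q, P p -> P q ->
    (p (exist _ e he) = q (exist _ e he) <-> f p = f q).

(** If [e] were inessential, [mu] would take one value [c] on all configurations
    that differ only at [e]. With [|A| >= 3] there are two distinct values
    [x, y <> c]; writing them at [e] gives two configurations of [P] with the same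
    image [c] under [f] but different values at [e], contradicting that [f] is
    well-behaved. *)
From Stdlib Require Import Classical ClassicalDescription.
From mathcomp Require Import all_boot.

Set Implicit Arguments.
Unset Strict Implicit.

Lemma two_distinct_avoiding (A : finType) (c : A) :
  2 < #|A| -> exists x y : A, [/\ x != c, y != c & x != y].
Proof.
move=> hA; have : 1 < #|predC1 c| by rewrite cardC1; case: #|A| hA => [|[|n]].
by case/card_gt1P => x [y [hx hy hxy]]; exists x, y.
Qed.

Section Configurations.

Variables (G A : Type) (S : G -> Prop).

Definition set_at (s : G) (x : A) (w : config S A) : config S A :=
  fun t => if excluded_middle_informative (sval t = s) then x else w t.

Lemma set_at_eq (s : G) (hs : S s) (x : A) (w : config S A) :
  set_at s x w (exist _ s hs) = x.
Proof. by rewrite /set_at; case: excluded_middle_informative. Qed.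

Lemma res_eq_set_at (s : G) (x y : A) (w : config S A) :
  res_eq s (set_at s x w) (set_at s y w).
Proof. by move=> t hts; rewrite /set_at; case: excluded_middle_informative. Qed.

Lemma not_essential_res_eq (mu : config S A -> A) (s : G) (z w : config S A) :
  ~ essential mu s -> res_eq s z w -> mu z = mu w.
Proof. by move=> hne hzw; apply: NNPP => hmu; apply: hne; exists z, w. Qed.

Variables (e : G) (he : S e) (mu : config S A -> A).
Variables (P : config S A -> Prop) (f : config S A -> A).
Hypotheses (hgen : generates he P f mu) (hwb : well_behaved he P f).

Lemma generated_eq_at_e (p q : config S A) :
  mu p <> p (exist _ e he) -> mu q <> q (exist _ e he) ->
  mu p = mu q -> p (exist _ e he) = q (exist _ e he).
Proof.
case: hgen => hP hf hp hq hpq.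
have [Pp Pq] : P p /\ P q by split; apply/hP.
by apply/(hwb Pp Pq); rewrite !hf.
Qed.

End Configurations.

Theorem mainTheorem5 (G : Type) (mul : G -> G -> G) (inv : G -> G) (e : G)
  (hG : is_group mul inv e)
  (A : finType) (S : G -> Prop) (hSfin : finite_subset S) (he : S e)
  (mu : config S A -> A) (P : config S A -> Prop) (f : config S A -> A)
  (hgen : generates he P f mu) (hwb : well_behaved he P f)
  (hS2 : exists s t : G, S s /\ S t /\ s <> t)
  (hA3 : 3 <= #|A|) :
  essential mu e.
Proof.
case/card_gt0P: (ltnW (ltnW hA3)) => a _.
pose w : config S A := fun=> a.
apply: NNPP => hne.
have mu_const x : mu (set_at e x w) = mu (set_at e a w).
  exact: not_essential_res_eq hne (res_eq_set_at x a w).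
have [x [y [hx hy hxy]]] := two_distinct_avoiding (mu (set_at e a w)) hA3.
have off_diag z : z != mu (set_at e a w) ->
    mu (set_at e z w) <> set_at e z w (exist _ e he).
  by rewrite mu_const set_at_eq => /eqP hz /esym.
have := generated_eq_at_e hgen hwb (off_diag x hx) (off_diag y hy).
by rewrite !mu_const !set_at_eq => /(_ erefl) /eqP; apply/negP.
Qed.
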